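(* Let $m,n\in\mathbb{Z}_{>0}$ with $m<n$ and $m,n$ of the same parity, and let $\psi:\mathcal{G}^{(m,n)}\to\mathbb{C}$ be a Whittaker function with $\psi(I_{m+n-1})\psi(J_{m+n-1})\ne0$. Then $W'=\mathrm{Ind}_{\mathcal{G}^{(m,n)}}^{\mathcal{G}^{(m,0)}}\mathbb{C}w_\psi$ is an irreducible $\mathcal{G}^{(m,0)}$-module, and for all $w\in W'$ and $i\in\mathbb{Z}_{\ge0}$: $L_{m+n+i}w=\psi(L_{m+n+i})w$, $H_{m+n+i}w=\psi(H_{m+n+i})w$, $I_{n+i}w=\psi(I_{n+i})w$, $J_{n+i}w=\psi(J_{n+i})w$.
   Context: $\mathcal{G}$ is the complex Lie algebra with basis $\{L_n,H_n,I_n,J_n,\mathbf{c}_1,\mathbf{c}_2,\mathbf{c}_3: n\in\mathbb{Z}\}$ whose brackets of basis elements are $[L_m,L_n]=(n-m)L_{m+n}+\frac{m^3-m}{12}\delta_{m+n,0}\mathbf{c}_1$, $[L_m,H_n]=nH_{m+n}+m^2\delta_{m+n,0}\mathbf{c}_2$, $[H_m,H_n]=m\delta_{m+n,0}\mathbf{c}_3$, $[L_m,I_n]=(n-m)I_{m+n}$, $[L_m,J_n]=(n-m)J_{m+n}$, $[H_m,I_n]=I_{m+n}$, $[H_m,J_n]=-J_{m+n}$ (and antisymmetric counterparts), all other brackets of basis elements zero. For $m,n\ge0$, $\mathcal{G}^{(m,n)}=\sum_{i\ge0}(\mathbb{C}L_{m+i}+\mathbb{C}H_{m+i}+\mathbb{C}I_{n+i}+\mathbb{C}J_{n+i})+\sum_{k=1}^3\mathbb{C}\mathbf{c}_k$.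 A Whittaker function is a Lie algebra homomorphism $\psi:\mathcal{G}^{(m,n)}\to\mathbb{C}$; $\mathbb{C}w_\psi$ is the one-dimensional $\mathcal{G}^{(m,n)}$-module with $xw_\psi=\psi(x)w_\psi$, and $\mathrm{Ind}$ denotes the induced module $\mathcal{U}(\mathcal{G}^{(m,0)})\otimes_{\mathcal{U}(\mathcal{G}^{(m,n)})}\mathbb{C}w_\psi$. *)

(* The field C of complex numbers is rendered as
   [complex R] (= R[i]) for an arbitrary [R : realType]. *)
From HB Require Import structures.
From mathcomp Require Import all_boot all_order all_algebra.
From mathcomp Require Import reals.
From mathcomp.real_closed Require Import complex.
Set Implicit Arguments. Unset Strict Implicit. Unset Printing Implicit Defensive.
Import Order.TTheory GRing.Theory Num.Theory.
Local Open Scope ring_scope.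

Inductive Gbasis : Type :=
  | BL of int | BH of int | BI of int | BJ of int | Bc1 | Bc2 | Bc3.

Section Bracket.
Variable C : fieldType.

Definition dlt (a b : int) : C := if a + b == 0 then 1 else 0.

(* [b1, b2] as a formal linear combination (list of (coefficient, basis)). *)
Definition brk (b1 b2 : Gbasis) : seq (C * Gbasis) :=
  match b1, b2 with
  | BL a, BL b => [:: ((b - a)%:~R, BL (a + b));
                      (((a ^+ 3 - a)%:~R / 12%:R) * dlt a b, Bc1)]
  | BL a, BH b => [:: (b%:~R, BH (a + b)); ((a ^+ 2)%:~R * dlt a b, Bc2)]
  | BH a, BL b => [:: (- a%:~R, BH (a + b)); (- (b ^+ 2)%:~R * dlt a b, Bc2)]
  | BH a, BH b => [:: (a%:~R * dlt a b, Bc3)]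
  | BL a, BI b => [:: ((b - a)%:~R, BI (a + b))]
  | BI a, BL b => [:: ((b - a)%:~R, BI (a + b))]
  | BL a, BJ b => [:: ((b - a)%:~R, BJ (a + b))]
  | BJ a, BL b => [:: ((b - a)%:~R, BJ (a + b))]
  | BH a, BI b => [:: (1, BI (a + b))]
  | BI a, BH b => [:: (-1, BI (a + b))]
  | BH a, BJ b => [:: (-1, BJ (a + b))]
  | BJ a, BH b => [:: (1, BJ (a + b))]
  | _, _ => [::]
  end.
End Bracket.

(* Basis elements of G^(m,n) = span{L_{m+i}, H_{m+i}, I_{n+i}, J_{n+i} : i>=0}
   + span{c1,c2,c3}. *)
Definition inSub (m n : nat) (b : Gbasis) : bool :=
  match b with
  | BL k | BH k => (m%:Z <= k)%R
  | BI k | BJ k => (n%:Z <= k)%R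
  | _ => true
  end.

(* A Whittaker function psi : G^(m,n) -> C, given by its values on the basis
   (extended linearly); being a Lie algebra homomorphism to the abelian C
   means it kills all brackets of basis elements of G^(m,n). *)
Definition whittaker_fun (C : fieldType) (m n : nat) (psi : Gbasis -> C) :=
  forall b1 b2, inSub m n b1 -> inSub m n b2 ->
    \sum_(p <- brk C b1 b2) p.1 * psi p.2 = 0.

(* A G^(m,n)-module structure on V, given by the action of the basis
   elements (extended linearly): rho [x,y] = rho x rho y - rho y rho x. *)
Definition is_Gmod (C : fieldType) (m n : nat) (V : lmodType C)
    (rho : Gbasis -> {linear V -> V}) :=
  forall b1 b2, inSub m n b1 -> inSub m n b2 -> forall v : V,
    rho b1 (rho b2 v) - rho b2 (rho b1 v) = \sum_(p <- brk C b1 b2) p.1 *: rho p.2 v.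

Definition is_Gmod_hom (C : fieldType) (m n : nat) (V V' : lmodType C)
    (rho : Gbasis -> {linear V -> V}) (rho' : Gbasis -> {linear V' -> V'})
    (f : {linear V -> V'}) :=
  forall b, inSub m n b -> forall v, f (rho b v) = rho' b (f v).

Definition whittaker_vec (C : fieldType) (m' n' : nat) (V : lmodType C)
    (rho : Gbasis -> {linear V -> V}) (psi : Gbasis -> C) (w : V) :=
  forall b, inSub m' n' b -> rho b w = psi b *: w.

(* (V, rho, w) is the induced module Ind_{G^(m,n)}^{G^(m,0)} C w_psi
   = U(G^(m,0)) (x)_{U(G^(m,n))} C w_psi, characterized by its universal
   property: a G^(m,0)-module with w = 1 (x) w_psi satisfying x w = psi(x) w
   for x in G^(m,n), such that for every G^(m,0)-module V' and vector w'
   with the same property there is a unique module map V -> V' with w |-> w'. *)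
Definition is_induced (C : fieldType) (m n : nat) (psi : Gbasis -> C)
    (V : lmodType C) (rho : Gbasis -> {linear V -> V}) (w : V) : Prop :=
  [/\ is_Gmod m 0 rho, whittaker_vec m n rho psi w &
    forall (V' : lmodType C) (rho' : Gbasis -> {linear V' -> V'}) (w' : V'),
      is_Gmod m 0 rho' -> whittaker_vec m n rho' psi w' ->
      exists f : {linear V -> V'},
        [/\ is_Gmod_hom m 0 rho rho' f, f w = w' &
          forall g : {linear V -> V'}, is_Gmod_hom m 0 rho rho' g -> g w = w' ->
            forall v, g v = f v]].

Definition is_submodule (C : fieldType) (m n : nat) (V : lmodType C)
    (rho : Gbasis -> {linear V -> V}) (S : V -> Prop) :=
  [/\ S 0, (forall u v, S u -> S v -> S (u + v)),
      (forall (a : C) v, S v -> S (a *: v)) &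
      (forall b, inSub m n b -> forall v, S v -> S (rho b v))].

Definition irreducible_Gmod (C : fieldType) (m n : nat) (V : lmodType C)
    (rho : Gbasis -> {linear V -> V}) :=
  (exists v : V, v != 0) /\
  forall S, is_submodule m n rho S ->
    (forall v, S v -> v = 0) \/ (forall v, S v).

(* The induced module is modelled on M = C[x_k, y_k : k < n]: I_k and J_k (k < n)
   act by multiplication by x_k and y_k, the other I_j, J_j and the central elements by the
   scalars psi, and L_a, H_a (a >= m) by psi plus the derivation of M dictated by their brackets
   with the I's and J's.  The universal property gives a module map f : W' -> M with f w = 1;
   mapping each monomial to the corresponding product of I's and J's applied to w gives a module
   map back, which by uniqueness is a left inverse of f.  Hence W' inherits from M both
   irreducibility and the scalar action of G^(m+n,n), which is plain on M.
   M is irreducible: if p is a nonzero element of a submodule and k is least such that x_k or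
   y_k occurs in p, then with a = m+n-1-k, L_a and H_a act on p, up to psi, as
   (k-a)(alpha d/dx_k + beta d/dy_k) and alpha d/dx_k - beta d/dy_k, where alpha = psi(I_(m+n-1))
   and beta = psi(J_(m+n-1)) are nonzero.  As k - a is odd, the submodule contains both partial
   derivatives of p; descending in degree it contains 1, which generates M. *)

From HB Require Import structures.
From mathcomp Require Import all_boot all_order all_algebra.
From mathcomp Require Import reals.
From mathcomp.real_closed Require Import complex.
From mathcomp Require Import zify ring.
From mathcomp.multinomials Require Import mpoly.
From mathcomp.multinomials Require ssrcomplements.
Import Order.TTheory GRing.Theory Num.Theory.
Local Open Scope ring_scope.
Set Implicit Arguments. Unset Strict Implicit. Unset Printing Implicit Defensive.

Section Derivation.
Variables (R : comRingType) (N : nat).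
Implicit Types (p q : {mpoly R[N]}) (d e : 'I_N -> {mpoly R[N]}).

Definition mder d p : {mpoly R[N]} := \sum_(i < N) p^`M(i) * d i.

Lemma mder_is_linear d : linear (mder d).
Proof.
move=> c p q; rewrite /mder scaler_sumr -big_split /=; apply: eq_bigr => i _.
by rewrite mderivD mderivZ mulrDl scalerAl.
Qed.
HB.instance Definition _ d :=
  GRing.isLinear.Build R {mpoly R[N]} {mpoly R[N]} _ (mder d) (mder_is_linear d).

Lemma mderC d c : mder d c%:MP = 0.
Proof. by rewrite /mder big1 // => i _; rewrite mderivC mul0r. Qed.

Lemma mderM d p q : mder d (p * q) = mder d p * q + p * mder d q.
Proof.
rewrite /mder mulr_suml mulr_sumr -big_split /=; apply: eq_bigr => i _.
by rewrite mderivM mulrDl; ring.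
Qed.

Lemma mderX d i : mder d 'X_i = d i.
Proof.
rewrite /mder (bigD1 i) //= big1 ?addr0 => [|j /negPf ji].
  rewrite mderivX mnm1E eqxx.
  have -> : (U_(i) - U_(i) = 0)%MM by apply/mnmP => j; rewrite !mnmE subnn.
  by rewrite mpolyX0 scale1r mul1r.
by rewrite mderivX mnm1E eq_sym ji scale0r mul0r.
Qed.

Lemma eq_mder d e p : d =1 e -> mder d p = mder e p.
Proof. by move=> de; apply: eq_bigr => i _; rewrite de. Qed.

Lemma mder0 p : mder (fun=> 0) p = 0.
Proof. by rewrite /mder big1 // => i _; rewrite mulr0. Qed.

Lemma mder_suml (T : Type) (r : seq T) (c : T -> R) (D : T -> 'I_N -> {mpoly R[N]}) p :
  mder (fun i => \sum_(t <- r) c t *: D t i) p = \sum_(t <- r) c t *: mder (D t) p.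
Proof.
rewrite /mder; under eq_bigr do rewrite mulr_sumr.
rewrite exchange_big /=; apply: eq_bigr => t _.
by rewrite scaler_sumr; apply: eq_bigr => i _; rewrite scalerAr.
Qed.

Lemma mder_commutator d e p :
  mder d (mder e p) - mder e (mder d p) = mder (fun i => mder d (e i) - mder e (d i)) p.
Proof.
have expand d1 e1 : mder d1 (mder e1 p) =
    \sum_(i < N) \sum_(j < N) p^`M(i)^`M(j) * d1 j * e1 i
  + \sum_(i < N) p^`M(i) * mder d1 (e1 i).
  rewrite [mder e1 p]/mder raddf_sum -big_split /=; apply: eq_bigr => i _.
  by rewrite mderM /mder mulr_suml; congr (_ + _); apply: eq_bigr => j _; ring.
rewrite !expand [in X in _ - X]exchange_big /=.
under [in X in _ - X]eq_bigr do under eq_bigr do rewrite mderiv_comm.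
rewrite [X in _ - (X + _)](_ : _ = \sum_(i < N) \sum_(j < N) p^`M(i)^`M(j) * d j * e i).
  by rewrite opprD addrACA subrr add0r -sumrB; apply: eq_bigr => i _; rewrite mulrBr.
by apply: eq_bigr => i _; apply: eq_bigr => j _; ring.
Qed.

Definition diffop (s : R) d q p : {mpoly R[N]} := s *: p + mder d p + q * p.

Lemma diffop_is_linear s d q : linear (diffop s d q).
Proof. move=> c u v; rewrite /diffop [mder d _]linearP /= -!mul_mpolyC; ring. Qed.
HB.instance Definition _ s d q :=
  GRing.isLinear.Build R {mpoly R[N]} {mpoly R[N]} _ (diffop s d q) (diffop_is_linear s d q).

Lemma diffop_commutator s1 s2 d1 d2 q1 q2 p :
  diffop s1 d1 q1 (diffop s2 d2 q2 p) - diffop s2 d2 q2 (diffop s1 d1 q1 p) =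
  diffop 0 (fun i => mder d1 (d2 i) - mder d2 (d1 i)) (mder d1 q2 - mder d2 q1) p.
Proof.
rewrite /diffop -mder_commutator !linearD !linearZ /= !mderM -!mul_mpolyC.
by rewrite mpolyC0; ring.
Qed.

Lemma diffop_suml (T : Type) (r : seq T) (c s : T -> R) (d : T -> 'I_N -> {mpoly R[N]})
    (q : T -> {mpoly R[N]}) p :
  \sum_(t <- r) c t *: diffop (s t) (d t) (q t) p =
  diffop (\sum_(t <- r) c t * s t) (fun i => \sum_(t <- r) c t *: d t i)
         (\sum_(t <- r) c t *: q t) p.
Proof.
rewrite /diffop mder_suml; elim: r => [|t r IH]; first by rewrite !big_nil scale0r mul0r !addr0.
by rewrite !big_cons IH -!mul_mpolyC rmorphD rmorphM /=; ring.
Qed.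

End Derivation.

Lemma monom_ind (N : nat) (P : 'X_{1..N} -> Prop) :
  P 0%MM -> (forall a i, P a -> P (a + U_(i))%MM) -> forall a, P a.
Proof.
move=> P0 PU a; move: {2}(mdeg a) (erefl (mdeg a)) => d.
elim: d a => [|d IH] a; first by move/eqP; rewrite mdeg_eq0 => /eqP ->.
have [i ai_gt0 | a0] := pickP (fun i => 0 < a i)%N; last first.
  have -> : a = 0%MM by apply/mnmP => j; rewrite mnm0E; move: (a0 j) => /= /negbT; lia.
  by rewrite mdeg0.
have -> : a = (a - U_(i) + U_(i))%MM.
  by rewrite submK //; apply/mnm_lepP => j; rewrite mnm1E; case: eqP => [<-|].
by rewrite mdegD mdeg1 addn1 => -[/IH]; apply: PU.
Qed.

Lemma monom_case (N : nat) (a : 'X_{1..N}) : a = 0%MM \/ exists a' i, a = (a' + U_(i))%MM.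
Proof. by elim/monom_ind: a => [|a i _]; [left | right; exists a, i]. Qed.

Lemma mderiv_eq0_const (C : numDomainType) (N : nat) (p : {mpoly C[N]}) :
  (forall i, p^`M(i) = 0) -> p = (p@_0%MM)%:MP.
Proof.
move=> dp0; apply/mpolyP => a; rewrite mcoeffC.
have [-> | [a' [i ->]]] := monom_case a; first by rewrite eqxx mulr1.
have := congr1 (mcoeff a') (dp0 i); rewrite mcoeff_mderiv mcoeff0 => /eqP.
rewrite mulrn_eq0 /= => /eqP ->.
by rewrite (_ : (a' + U_(i) == 0)%MM = false) ?mulr0 // -mdeg_eq0 mdegD mdeg1 addn1.
Qed.

Lemma msize_mderiv (C : ringType) (N : nat) (p : {mpoly C[N]}) i :
  p^`M(i) != 0 -> (msize p^`M(i) < msize p)%N.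
Proof.
move=> dp_neq0; rewrite -(mlead_deg dp_neq0).
have : (mlead p^`M(i) + U_(i))%MM \in msupp p.
  rewrite mcoeff_msupp; move: (mlead_supp dp_neq0); rewrite mcoeff_msupp mcoeff_mderiv.
  by apply: contra => /eqP ->; rewrite mul0rn.
by move/msize_mdeg_lt; rewrite mdegD mdeg1 addn1.
Qed.

Lemma mem_sum_diff (C : numFieldType) (W : lmodType C) (T : W -> Prop) :
  (forall u v, T u -> T v -> T (u + v)) -> (forall (c : C) v, T v -> T (c *: v)) ->
  forall u v, T (u + v) -> T (u - v) -> T u /\ T v.
Proof.
move=> TD TZ; have two_neq0 : (2 : C) != 0 by rewrite pnatr_eq0.
have half x y : T (x + y) -> T (x - y) -> T x.
  move=> Tp Tm; have := TZ 2^-1 _ (TD _ _ Tp Tm).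
  by rewrite addrACA subrr addr0 -mulr2n -scaler_nat scalerA mulVf // scale1r.
move=> u v Tp Tm; split; first exact: half Tp Tm.
apply: (half v u); first by rewrite addrC.
by rewrite -opprB -scaleN1r; apply: TZ.
Qed.

Section Retract.
Variables (C : fieldType) (m n : nat) (V W : lmodType C).
Variables (rhoV : Gbasis -> {linear V -> V}) (rhoW : Gbasis -> {linear W -> W}).
Variables (f : {linear V -> W}) (g : {linear W -> V}).
Hypotheses (f_hom : is_Gmod_hom m n rhoV rhoW f) (g_hom : is_Gmod_hom m n rhoW rhoV g).
Hypothesis fK : cancel f g.

Lemma retract_scalar b c : inSub m n b ->
  (forall w, rhoW b w = c *: w) -> forall v, rhoV b v = c *: v.
Proof. by move=> Hb rhoWb v; rewrite -[v in LHS]fK -g_hom // rhoWb linearZ /= fK. Qed.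

Lemma retract_irreducible :
  (exists v : V, v != 0) -> irreducible_Gmod m n rhoW -> irreducible_Gmod m n rhoV.
Proof.
move=> nzV [_ irrW]; split=> // S [S0 SD SZ Sb].
pose T w := exists2 v, S v & f v = w.
have T_sub : is_submodule m n rhoW T.
  split; first by exists 0; rewrite ?linear0.
  - by move=> _ _ [u Su <-] [v Sv <-]; exists (u + v); rewrite ?linearD //; apply: SD.
  - by move=> c _ [v Sv <-]; exists (c *: v); rewrite ?linearZ //; apply: SZ.
  - by move=> b Hb _ [v Sv <-]; exists (rhoV b v); rewrite ?f_hom //; apply: Sb.
have [T0 | Tall] := irrW T T_sub.
  by left => v Sv; apply: (can_inj fK); rewrite linear0; apply: T0; exists v.
by right => v; have [u Su fu] := Tall (f v); rewrite -(fK v) -fu fK.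
Qed.

End Retract.

Lemma induced_endo_id (C : fieldType) (m n : nat) (psi : Gbasis -> C) (V : lmodType C)
    (rho : Gbasis -> {linear V -> V}) (w : V) :
  is_induced m n psi rho w -> forall h : {linear V -> V},
  is_Gmod_hom m 0 rho rho h -> h w = w -> h =1 id.
Proof.
case=> rho_Gmod w_whittaker univ h h_hom hw v.
have [f [_ _ f_uniq]] := univ V rho w rho_Gmod w_whittaker.
by rewrite (f_uniq h) // -(f_uniq idfun).
Qed.

Section WhittakerFunction.
Variables (C : fieldType) (m n : nat) (psi : Gbasis -> C).
Hypothesis psi_whittaker : whittaker_fun m n psi.

Lemma whittaker_funI_eq0 j : (m + n)%:Z <= j -> psi (BI j) = 0.
Proof.
move=> Hj; have := @psi_whittaker (BH m) (BI (j - m%:Z)).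
rewrite /= big_cons big_nil addr0 mul1r (_ : m%:Z + (j - m%:Z) = j); last by lia.
by apply => //; lia.
Qed.

Lemma whittaker_funJ_eq0 j : (m + n)%:Z <= j -> psi (BJ j) = 0.
Proof.
move=> Hj; have := @psi_whittaker (BH m) (BJ (j - m%:Z)).
rewrite /= big_cons big_nil addr0 mulN1r (_ : m%:Z + (j - m%:Z) = j); last by lia.
by move=> H; apply/eqP; rewrite -oppr_eq0 H //; lia.
Qed.

End WhittakerFunction.

Section Model.
Variables (C : numFieldType) (m n : nat) (psi : Gbasis -> C).
Hypothesis psi_whittaker : whittaker_fun m n psi.

(* The model is C[x_0, ..., x_(n-1), y_0, ..., y_(n-1)]: the variable [lshift n k] is x_k,
   standing for I_k, and [rshift n k] is y_k, standing for J_k. *)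
Local Notation M := {mpoly C[n + n]}.

(* Negative j is irrelevant: I_j and J_j with j < 0 are not in G^(m,0). *)
Definition int_ord (j : int) : option 'I_n := if j is Posz k then insub k else None.

Definition xI (j : int) : M :=
  if int_ord j is Some k then 'X_(lshift n k) else (psi (BI j))%:MP.
Definition yJ (j : int) : M :=
  if int_ord j is Some k then 'X_(rshift n k) else (psi (BJ j))%:MP.

Lemma int_ord_case (j : int) : 0 <= j -> (exists k : 'I_n, j = k) \/ n%:Z <= j.
Proof.
by case: j => // k _; case: (ltnP k n) => [lt_kn | le_nk]; [left; exists (Ordinal lt_kn) | right].
Qed.

Lemma xI_ord (k : 'I_n) : xI k = 'X_(lshift n k).
Proof. by rewrite /xI /int_ord valK. Qed.

Lemma yJ_ord (k : 'I_n) : yJ k = 'X_(rshift n k).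
Proof. by rewrite /yJ /int_ord valK. Qed.

Lemma int_ord_high (j : int) : n%:Z <= j -> int_ord j = None.
Proof. by case: j => // k le_nk; rewrite /int_ord insubN //; apply/negP; lia. Qed.

Lemma xI_high j : n%:Z <= j -> xI j = (psi (BI j))%:MP.
Proof. by move=> le_nj; rewrite /xI int_ord_high. Qed.

Lemma yJ_high j : n%:Z <= j -> yJ j = (psi (BJ j))%:MP.
Proof. by move=> le_nj; rewrite /yJ int_ord_high. Qed.

Lemma xI_eq0 j : (m + n)%:Z <= j -> xI j = 0.
Proof. by move=> le_j; rewrite xI_high ?(whittaker_funI_eq0 psi_whittaker) //; lia. Qed.

Lemma yJ_eq0 j : (m + n)%:Z <= j -> yJ j = 0.
Proof. by move=> le_j; rewrite yJ_high ?(whittaker_funJ_eq0 psi_whittaker) //; lia. Qed.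

Definition shift_der (a : int) (fx fy : int -> C) (i : 'I_(n + n)) : M :=
  match split i with
  | inl k => fx k *: xI (k%:Z + a)
  | inr k => fy k *: yJ (k%:Z + a)
  end.

Lemma shift_der_lshift a fx fy (k : 'I_n) :
  shift_der a fx fy (lshift n k) = fx k *: xI (k%:Z + a).
Proof. by rewrite /shift_der (unsplitK (inl k)). Qed.

Lemma shift_der_rshift a fx fy (k : 'I_n) :
  shift_der a fx fy (rshift n k) = fy k *: yJ (k%:Z + a).
Proof. by rewrite /shift_der (unsplitK (inr k)). Qed.

Lemma shift_der_eq0 a fx fy : (m + n)%:Z <= a -> shift_der a fx fy =1 fun=> 0.
Proof.
move=> le_a i; rewrite /shift_der.
by case: (split i) => k; rewrite ?xI_eq0 ?yJ_eq0 ?scaler0 //; lia.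
Qed.

Lemma mder_shift_xI a fx fy j : m%:Z <= a -> 0 <= j ->
  mder (shift_der a fx fy) (xI j) = fx j *: xI (j + a).
Proof.
move=> le_ma /int_ord_case[[k ->] | le_nj]; first by rewrite xI_ord mderX shift_der_lshift.
by rewrite xI_high // mderC xI_eq0 ?scaler0 //; lia.
Qed.

Lemma mder_shift_yJ a fx fy j : m%:Z <= a -> 0 <= j ->
  mder (shift_der a fx fy) (yJ j) = fy j *: yJ (j + a).
Proof.
move=> le_ma /int_ord_case[[k ->] | le_nj]; first by rewrite yJ_ord mderX shift_der_rshift.
by rewrite yJ_high // mderC yJ_eq0 ?scaler0 //; lia.
Qed.

Lemma shift_der_commutator a b fx fy gx gy i : m%:Z <= a -> m%:Z <= b ->
  mder (shift_der a fx fy) (shift_der b gx gy i) - mder (shift_der b gx gy) (shift_der a fx fy i) =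
  match split i with
  | inl k => (gx k * fx (k%:Z + b) - fx k * gx (k%:Z + a)) *: xI (k%:Z + (a + b))
  | inr k => (gy k * fy (k%:Z + b) - fy k * gy (k%:Z + a)) *: yJ (k%:Z + (a + b))
  end.
Proof.
move=> le_ma le_mb; rewrite /shift_der.
case: (split i) => k; rewrite !linearZ /= ?mder_shift_xI ?mder_shift_yJ; try lia;
  by rewrite scalerN scalerBl !scalerA -!addrA [b + a]addrC.
Qed.

Definition model_scalar (b : Gbasis) : C :=
  match b with BI _ | BJ _ => 0 | _ => psi b end.

(* Read off from [L_a, I_k] = (k - a) I_(k+a), [H_a, I_k] = I_(k+a), [H_a, J_k] = - J_(k+a). *)
Definition model_der (b : Gbasis) : 'I_(n + n) -> M :=
  match b with
  | BL a => shift_der a (fun k => (k - a)%:~R) (fun k => (k - a)%:~R)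
  | BH a => shift_der a (fun=> 1) (fun=> -1)
  | _ => fun=> 0
  end.

Definition model_mul (b : Gbasis) : M :=
  match b with BI j => xI j | BJ j => yJ j | _ => 0 end.

Definition model_rho (b : Gbasis) : {linear M -> M} :=
  diffop (model_scalar b) (model_der b) (model_mul b).

Lemma model_scalar_bracket b1 b2 : inSub m 0 b1 -> inSub m 0 b2 ->
  \sum_(t <- brk C b1 b2) t.1 * model_scalar t.2 = 0.
Proof.
move=> H1 H2; have := @psi_whittaker b1 b2.
case: b1 H1 => [a|a|a|a|||]; case: b2 H2 => [b|b|b|b|||] //= H2 H1 psi_brk;
  rewrite ?big_cons ?big_nil /= ?mulr0 ?addr0 //; move: (psi_brk H1 H2);
  by rewrite ?big_cons ?big_nil /= ?addr0.
Qed.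

Lemma model_der_bracket b1 b2 : inSub m 0 b1 -> inSub m 0 b2 -> forall i,
  mder (model_der b1) (model_der b2 i) - mder (model_der b2) (model_der b1 i) =
  \sum_(t <- brk C b1 b2) t.1 *: model_der t.2 i.
Proof.
move=> H1 H2 i.
case: b1 H1 => [a|a|a|a|||]; case: b2 H2 => [b|b|b|b|||] //= H2 H1;
  rewrite ?big_cons ?big_nil /= ?mder0 ?linear0 ?scaler0 ?addr0 ?subr0 //.
all: rewrite shift_der_commutator // /shift_der; case: (split i) => k.
all: first [ by rewrite subrr scale0r
            | rewrite scalerA; congr (_ *: _); rewrite ?intrD ?intrB; ring ].
Qed.

Lemma model_mul_bracket b1 b2 : inSub m 0 b1 -> inSub m 0 b2 ->
  mder (model_der b1) (model_mul b2) - mder (model_der b2) (model_mul b1) =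
  \sum_(t <- brk C b1 b2) t.1 *: model_mul t.2.
Proof.
case: b1 => [a|a|a|a|||]; case: b2 => [b|b|b|b|||] //= H1 H2;
  rewrite ?big_cons ?big_nil /= ?mder0 ?linear0 ?scaler0 ?addr0 ?subr0 ?sub0r
          ?mder_shift_xI ?mder_shift_yJ //.
all: by rewrite ?[b + a]addrC -?scaleNr ?opprK // -intrN opprB.
Qed.

Lemma model_Gmod : is_Gmod m 0 model_rho.
Proof.
move=> b1 b2 H1 H2 p; rewrite /= diffop_commutator diffop_suml model_scalar_bracket //.
rewrite -model_mul_bracket //; congr (_ + _ + _); exact/eq_mder/model_der_bracket.
Qed.

Lemma model_whittaker : whittaker_vec m n model_rho psi 1.
Proof.
move=> b Hb; rewrite /= /diffop mderC mulr1.
case: b Hb => [a|a|a|a|||] //= Hb; rewrite ?scale0r ?add0r ?addr0 ?alg_mpolyC //.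
- by rewrite xI_high ?alg_mpolyC.
- by rewrite yJ_high ?alg_mpolyC.
Qed.

Lemma model_rho_scalar b : inSub (m + n) n b -> forall p, model_rho b p = psi b *: p.
Proof.
move=> Hb p; rewrite /= /diffop.
case: b Hb => [a|a|a|a|||] //= Hb; rewrite ?mder0 ?mul0r ?addr0 //.
1,2: by rewrite (eq_mder _ (shift_der_eq0 _ _ _)) ?mder0 ?addr0.
- by rewrite scale0r xI_high ?mul_mpolyC ?add0r //; lia.
- by rewrite scale0r yJ_high ?mul_mpolyC ?add0r //; lia.
Qed.

Section ModelToModule.
Variables (V : lmodType C) (rho : Gbasis -> {linear V -> V}) (w0 : V).
Hypotheses (rho_Gmod : is_Gmod m 0 rho) (w0_whittaker : whittaker_vec m n rho psi w0).

Lemma rho_comm b1 b2 u : inSub m 0 b1 -> inSub m 0 b2 -> brk C b1 b2 = [::] ->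
  rho b1 (rho b2 u) = rho b2 (rho b1 u).
Proof. by move=> H1 H2 brk0; apply/eqP; rewrite -subr_eq0 rho_Gmod // brk0 big_nil. Qed.

Definition raise (i : 'I_(n + n)) : {linear V -> V} :=
  match split i with inl k => rho (BI k) | inr k => rho (BJ k) end.

Lemma raise_lshift (k : 'I_n) : raise (lshift n k) = rho (BI k).
Proof. by rewrite /raise (unsplitK (inl k)). Qed.

Lemma raise_rshift (k : 'I_n) : raise (rshift n k) = rho (BJ k).
Proof. by rewrite /raise (unsplitK (inr k)). Qed.

Lemma raiseC i j u : raise i (raise j u) = raise j (raise i u).
Proof. by rewrite /raise; case: (split i) => k; case: (split j) => l; apply: rho_comm. Qed.

Lemma rho_raiseC b i u : inSub m 0 b ->
    (forall k : nat, brk C b (BI k) = [::] /\ brk C b (BJ k) = [::]) ->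
  rho b (raise i u) = raise i (rho b u).
Proof.
by move=> Hb brk0; rewrite /raise; case: (split i) => k; apply: rho_comm => //; case: (brk0 k).
Qed.

Definition raise_pow (a : 'X_{1..n + n}) (s : seq 'I_(n + n)) (u : V) : V :=
  foldr (fun i => iter (a i) (raise i)) u s.

Lemma raise_pow_comm (T : V -> V) a s u : (forall i u, T (raise i u) = raise i (T u)) ->
  T (raise_pow a s u) = raise_pow a s (T u).
Proof. by move=> TC; elim: s => //= j s IH; elim: (a j) => //= k IHk; rewrite TC IHk. Qed.

Lemma eq_raise_pow (a a' : 'X_{1..n + n}) s u :
  {in s, a =1 a'} -> raise_pow a s u = raise_pow a' s u.
Proof.
elim: s => //= j s IH aa'; rewrite aa' ?mem_head // IH // => x xs.
by apply: aa'; rewrite in_cons xs orbT.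
Qed.

Lemma raise_powU a s u i : uniq s -> i \in s ->
  raise i (raise_pow a s u) = raise_pow (a + U_(i))%MM s u.
Proof.
elim: s => //= j s IH /andP[js us]; rewrite in_cons => /orP[/eqP ij | iS].
  subst j; rewrite mnmDE mnm1E eqxx addn1 /= (@eq_raise_pow (a + U_(i))%MM a) // => x xs.
  by rewrite mnmDE mnm1E; case: eqP => [ix | _]; [subst x; rewrite xs in js | rewrite addn0].
have /negPf ji : i != j by apply: contraNneq js => <-.
rewrite mnmDE mnm1E ji addn0 -IH //; elim: (a j) => //= k <-; exact: raiseC.
Qed.

Definition monomial_vec (a : 'X_{1..n + n}) : V := raise_pow a (enum 'I_(n + n)) w0.

Lemma raise_monomial_vec a i : raise i (monomial_vec a) = monomial_vec (a + U_(i))%MM.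
Proof. by rewrite /monomial_vec raise_powU ?enum_uniq ?mem_enum. Qed.

Lemma monomial_vec0 : monomial_vec 0%MM = w0.
Proof. by rewrite /monomial_vec; elim: (enum _) => //= j s ->; rewrite mnm0E. Qed.

Definition poly_vec (p : M) : V := \sum_(a <- msupp p) p@_a *: monomial_vec a.

Lemma poly_vec_bounded k p : (msize p <= k)%N ->
  poly_vec p = \sum_(a : 'X_{1..(n + n) < k}) p@_a *: monomial_vec a.
Proof.
pose I : subFinType _ := 'X_{1..(n + n) < k}.
move=> le_pk; rewrite /poly_vec (ssrcomplements.big_mksub I) /=; first last.
- by move=> x /msize_mdeg_lt/leq_trans/(_ le_pk).
- by rewrite msupp_uniq.
by rewrite big_rmcond //= => a /memN_msupp_eq0 ->; rewrite scale0r.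
Qed.

Lemma poly_vec_is_linear : linear poly_vec.
Proof.
move=> c p q; pose k := maxn (msize p) (msize q).
have le_p : (msize p <= k)%N by rewrite leq_maxl.
have le_q : (msize q <= k)%N by rewrite leq_maxr.
have le_cpq : (msize (c *: p + q) <= k)%N.
  apply: leq_trans (msizeD_le _ _) _; rewrite geq_max le_q andbT.
  exact: leq_trans (msizeZ_le _ _) le_p.
rewrite !(poly_vec_bounded le_p, poly_vec_bounded le_q, poly_vec_bounded le_cpq).
rewrite scaler_sumr -big_split /=; apply: eq_bigr => a _.
by rewrite mcoeffD mcoeffZ scalerDl scalerA.
Qed.
HB.instance Definition _ := GRing.isLinear.Build C M V _ poly_vec poly_vec_is_linear.

Lemma poly_vecX a : poly_vec 'X_[a] = monomial_vec a.
Proof. by rewrite /poly_vec msuppX big_seq1 mcoeffX eqxx scale1r. Qed.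

Lemma poly_vec1 : poly_vec 1 = w0.
Proof. by rewrite -mpolyX0 poly_vecX monomial_vec0. Qed.

Lemma poly_vec_mulX i p : poly_vec ('X_i * p) = raise i (poly_vec p).
Proof.
rewrite [p in LHS]mpolyE mulr_sumr linear_sum [in RHS]/poly_vec linear_sum.
apply: eq_bigr => a _.
by rewrite -scalerAr -mpolyXD !linearZ /= poly_vecX addmC raise_monomial_vec.
Qed.

Lemma poly_vec_scalar b c : (forall i u, rho b (raise i u) = raise i (rho b u)) ->
  rho b w0 = c *: w0 -> forall p, rho b (poly_vec p) = c *: poly_vec p.
Proof.
move=> rbC rb_w0 p; rewrite linear_sum scaler_sumr; apply: eq_bigr => a _.
have scaleC i u : c *: raise i u = raise i (c *: u) by rewrite linearZ.
rewrite linearZ /= /monomial_vec raise_pow_comm // rb_w0.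
by rewrite -(raise_pow_comm (T := fun u => c *: u)) // !scalerA mulrC.
Qed.

Lemma poly_vec_xI j p : 0 <= j -> poly_vec (xI j * p) = rho (BI j) (poly_vec p).
Proof.
move=> /int_ord_case[[k ->] | le_nj]; first by rewrite xI_ord poly_vec_mulX raise_lshift.
rewrite xI_high // mul_mpolyC linearZ /=; symmetry; apply: poly_vec_scalar.
- by move=> i u; apply: rho_raiseC => //; case: j le_nj.
- by rewrite w0_whittaker.
Qed.

Lemma poly_vec_yJ j p : 0 <= j -> poly_vec (yJ j * p) = rho (BJ j) (poly_vec p).
Proof.
move=> /int_ord_case[[k ->] | le_nj]; first by rewrite yJ_ord poly_vec_mulX raise_rshift.
rewrite yJ_high // mul_mpolyC linearZ /=; symmetry; apply: poly_vec_scalar.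
- by move=> i u; apply: rho_raiseC => //; case: j le_nj.
- by rewrite w0_whittaker.
Qed.

Lemma rho_LH_raise b a i q : b = BL a \/ b = BH a -> m%:Z <= a ->
  rho b (raise i (poly_vec q)) = raise i (rho b (poly_vec q)) + poly_vec (model_der b i * q).
Proof.
move=> Hb le_ma; have k_a_ge0 (k : nat) : 0 <= k%:Z + a by lia.
apply/eqP; rewrite -subr_eq0 opprD addrA subr_eq0.
case: Hb => ->; rewrite /raise /= /shift_der; case: (split i) => k;
  by rewrite -scalerAl linearZ /= ?poly_vec_xI ?poly_vec_yJ // rho_Gmod //=
             !big_cons big_nil addr0 [a + k]addrC.
Qed.

Lemma model_rho_mulX b a i q : b = BL a \/ b = BH a ->
  model_rho b ('X_i * q) = 'X_i * model_rho b q + model_der b i * q.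
Proof.
move=> Hb; rewrite /= /diffop (_ : model_mul b = 0); last by case: Hb => ->.
by rewrite mderM mderX !mul0r !addr0 -!mul_mpolyC; ring.
Qed.

Lemma poly_vec_hom_LH b a : b = BL a \/ b = BH a -> m%:Z <= a ->
  forall p, poly_vec (model_rho b p) = rho b (poly_vec p).
Proof.
move=> Hb le_ma.
suff monomial_hom a' : poly_vec (model_rho b 'X_[a']) = rho b (monomial_vec a').
  move=> p; rewrite [p in LHS]mpolyE [in RHS]/poly_vec !linear_sum; apply: eq_bigr => a' _.
  by rewrite !linearZ /= monomial_hom.
have Hb_sub : inSub m n b by case: Hb => ->.
elim/monom_ind: a' => [|a' i IH].
  by rewrite mpolyX0 model_whittaker // linearZ /= poly_vec1 monomial_vec0 w0_whittaker.
rewrite -raise_monomial_vec -poly_vecX (rho_LH_raise _ _ Hb le_ma) poly_vecX -IH.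
by rewrite -poly_vec_mulX -linearD /= -(model_rho_mulX _ _ Hb) -mpolyXD addmC.
Qed.

Lemma poly_vec_hom : is_Gmod_hom m 0 model_rho rho poly_vec.
Proof.
case=> [a|a|j|j|||] Hb p.
- exact: (poly_vec_hom_LH (or_introl erefl)).
- exact: (poly_vec_hom_LH (or_intror erefl)).
- by rewrite /= /diffop mder0 scale0r !add0r poly_vec_xI.
- by rewrite /= /diffop mder0 scale0r !add0r poly_vec_yJ.
all: rewrite /= /diffop mder0 mul0r !addr0 linearZ /=; symmetry.
all: by apply: poly_vec_scalar; [move=> i u; exact: rho_raiseC | exact: w0_whittaker].
Qed.

End ModelToModule.

Section Irreducible.
Hypotheses (m_gt0 : (0 < m)%N) (parity : odd m = odd n)
  (psi_top_neq0 : psi (BI (m + n - 1)%N%:Z) * psi (BJ (m + n - 1)%N%:Z) != 0).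

Section Submodule.
Variable T : M -> Prop.
Hypothesis T_sub : is_submodule m 0 model_rho T.

Lemma model_submodule_mulX i q : T q -> T ('X_i * q).
Proof.
have [_ _ _ T_rho] := T_sub; move=> Tq; rewrite -(splitK i); case: (split i) => k /=.
- by move: (T_rho (BI k) isT q Tq); rewrite /= /diffop mder0 scale0r !add0r xI_ord.
- by move: (T_rho (BJ k) isT q Tq); rewrite /= /diffop mder0 scale0r !add0r yJ_ord.
Qed.

Lemma model_submodule_full : T 1 -> forall p, T p.
Proof.
have [T0 TD TZ _] := T_sub; move=> T1.
have TX a : T 'X_[a].
  elim/monom_ind: a => [|a i Ta]; first by rewrite mpolyX0.
  by rewrite addmC mpolyXD; apply: model_submodule_mulX.
by elim/mpolyind => [|c a p _ _ Tp] //; apply: TD => //; apply: TZ.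
Qed.

Lemma model_submodule_mder b a p : b = BL a \/ b = BH a -> m%:Z <= a -> T p ->
  T (mder (model_der b) p).
Proof.
have [_ TD TZ T_rho] := T_sub; move=> Hb le_ma Tp.
have Hb_sub : inSub m 0 b by case: Hb => ->.
have := TD _ _ (T_rho b Hb_sub p Tp) (TZ (- psi b) _ Tp).
rewrite /= /diffop.
have [-> ->] : model_scalar b = psi b /\ model_mul b = 0 by case: Hb => ->.
by rewrite mul0r addr0 scaleNr addrAC subrr add0r.
Qed.

(* With a = m+n-1-k, x_k and y_k are sent to the constants psi(I_(m+n-1)), psi(J_(m+n-1)),
   the higher variables to zero, and the lower ones do not occur in p. *)
Lemma mder_shift_lowest p (k : 'I_n) fx fy :
    (forall j : 'I_n, (j < k)%N -> p^`M(lshift n j) = 0 /\ p^`M(rshift n j) = 0) ->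
  mder (shift_der (m + n - 1 - k)%N%:Z fx fy) p =
    (fx k * psi (BI (m + n - 1)%N%:Z)) *: p^`M(lshift n k) +
    (fy k * psi (BJ (m + n - 1)%N%:Z)) *: p^`M(rshift n k).
Proof.
move=> lower; set a := (m + n - 1 - k)%N%:Z; have lt_kn := ltn_ord k.
have at_k : k%:Z + a = (m + n - 1)%N%:Z by lia.
have above (j : 'I_n) : j != k -> ~~ (j < k)%N -> (m + n)%:Z <= j%:Z + a.
  move=> jk; rewrite -leqNgt leq_eqVlt => /orP[/eqP/val_inj kj | lt_kj]; last by lia.
  by rewrite kj eqxx in jk.
rewrite /mder big_split_ord /=; congr (_ + _); rewrite (bigD1 k) //= big1 ?addr0.
- rewrite shift_der_lshift at_k xI_high; last by lia.
  by rewrite -scalerAr mulrC mul_mpolyC scalerA.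
- move=> j jk; rewrite shift_der_lshift; have [lt_jk | ge_jk] := boolP (j < k)%N.
    by rewrite (proj1 (lower j lt_jk)) mul0r.
  by rewrite xI_eq0 ?scaler0 ?mulr0 //; apply: above.
- rewrite shift_der_rshift at_k yJ_high; last by lia.
  by rewrite -scalerAr mulrC mul_mpolyC scalerA.
- move=> j jk; rewrite shift_der_rshift; have [lt_jk | ge_jk] := boolP (j < k)%N.
    by rewrite (proj2 (lower j lt_jk)) mul0r.
  by rewrite yJ_eq0 ?scaler0 ?mulr0 //; apply: above.
Qed.

Lemma model_submodule_lowest_mderiv p (k : 'I_n) : T p ->
    (forall j : 'I_n, (j < k)%N -> p^`M(lshift n j) = 0 /\ p^`M(rshift n j) = 0) ->
  T p^`M(lshift n k) /\ T p^`M(rshift n k).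
Proof.
have [_ TD TZ _] := T_sub; move=> Tp lower.
set a := (m + n - 1 - k)%N%:Z; have lt_kn := ltn_ord k.
have le_ma : m%:Z <= a by lia.
(* k - a = 2k - (m + n - 1) is odd, as m + n is even. *)
have ka_neq0 : (k%:Z - a)%:~R != 0 :> C.
  have [h mn2h] : exists h, (m + n = h * 2)%N.
    by exists (m + n)./2; rewrite muln2 -[LHS]odd_double_half oddD parity addbb.
  by rewrite intr_eq0; apply/eqP; lia.
have /andP[alpha_neq0 beta_neq0] :
    (psi (BI (m + n - 1)%N%:Z) != 0) && (psi (BJ (m + n - 1)%N%:Z) != 0).
  by rewrite -negb_or -mulf_eq0.
have := model_submodule_mder (or_intror erefl) le_ma Tp.
have := model_submodule_mder (or_introl erefl) le_ma Tp.
rewrite /= !mder_shift_lowest // => TL TH.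
set alpha := psi _ in alpha_neq0 TL TH *; set beta := psi _ in beta_neq0 TL TH *.
have [Tx Ty] : T (alpha *: p^`M(lshift n k)) /\ T (beta *: p^`M(rshift n k)).
  apply: (mem_sum_diff TD TZ).
  - by move: (TZ (k%:Z - a)%:~R^-1 _ TL); rewrite scalerDr !scalerA !mulrA mulVf // !mul1r.
  - by move: TH; rewrite mul1r mulN1r scaleNr.
by split; [move: (TZ alpha^-1 _ Tx) | move: (TZ beta^-1 _ Ty)];
  rewrite scalerA mulVf // scale1r.
Qed.

Lemma model_submodule_one p : T p -> p != 0 -> T 1.
Proof.
have [_ _ TZ _] := T_sub; have [s] := ubnP (msize p).
elim: s p => // s IH p lt_ps Tp p_neq0.
pose P (k : 'I_n) := (p^`M(lshift n k) != 0) || (p^`M(rshift n k) != 0).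
have [k0 Pk0 | noP] := pickP P.
  have [k Pk k_min] := arg_minnP (fun k : 'I_n => val k) Pk0.
  have lower (j : 'I_n) : (j < k)%N -> p^`M(lshift n j) = 0 /\ p^`M(rshift n j) = 0.
    move=> lt_jk; have /norP[/negPn/eqP -> /negPn/eqP ->] // : ~~ P j.
    by apply: contraTN lt_jk => /k_min; rewrite -leqNgt.
  have [Tx Ty] := model_submodule_lowest_mderiv Tp lower.
  have lt_d i : p^`M(i) != 0 -> (msize p^`M(i) < s)%N.
    by move=> dp_neq0; apply: leq_trans (msize_mderiv dp_neq0) _.
  by case/orP: Pk => [/[dup] /lt_d lt_dx | /[dup] /lt_d lt_dy]; apply: IH.
have p_const : p = (p@_0%MM)%:MP.
  apply: mderiv_eq0_const => i; rewrite -(splitK i); case: (split i) => k /=;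
    by move: (noP k) => /negbT /norP[/negPn/eqP dx /negPn/eqP dy].
have c_neq0 : p@_0%MM != 0 by apply: contraNneq p_neq0 => c0; rewrite p_const c0.
move: (TZ (p@_0%MM)^-1 _ Tp).
by rewrite {2}p_const -mul_mpolyC -rmorphM /= mulVf // mpolyC1.
Qed.

End Submodule.

Lemma model_irreducible : irreducible_Gmod m 0 model_rho.
Proof.
split; first by exists 1; rewrite oner_eq0.
move=> T T_sub; have [[p Tp p_neq0] | T0] := boolp.pselect (exists2 p, T p & p != 0).
  by right; apply: model_submodule_full T_sub (model_submodule_one T_sub Tp p_neq0).
by left=> p Tp; apply/eqP/negPn/negP => p_neq0; apply: T0; exists p.
Qed.

End Irreducible.
End Model.

Theorem corollary3p4 (R : realType) (m n : nat)
    (psi : Gbasis -> R[i])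
    (Hm : (0 < m)%N) (Hmn : (m < n)%N) (Hpar : odd m = odd n)
    (Hpsi : whittaker_fun m n psi)
    (Hnz : psi (BI (m + n - 1)%:Z) * psi (BJ (m + n - 1)%:Z) != 0)
    (V : lmodType R[i]) (rho : Gbasis -> {linear V -> V}) (w0 : V)
    (Hind : is_induced m n psi rho w0) :
  irreducible_Gmod m 0 rho /\
  forall (w : V) (i : nat),
    [/\ rho (BL (m + n + i)%:Z) w = psi (BL (m + n + i)%:Z) *: w,
        rho (BH (m + n + i)%:Z) w = psi (BH (m + n + i)%:Z) *: w,
        rho (BI (n + i)%:Z) w = psi (BI (n + i)%:Z) *: w &
        rho (BJ (n + i)%:Z) w = psi (BJ (n + i)%:Z) *: w].
Proof.
have [rho_Gmod w0_whittaker univ] := Hind.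
have [f [f_hom f_w0 _]] := univ _ _ _ (model_Gmod Hpsi) (model_whittaker psi).
have g_hom := poly_vec_hom rho_Gmod w0_whittaker.
have fK : cancel f (poly_vec rho w0).
  apply: (induced_endo_id Hind (h := poly_vec rho w0 \o f)); last by rewrite /= f_w0 poly_vec1.
  by move=> b Hb v; rewrite /= f_hom // g_hom.
split.
  apply: (retract_irreducible f_hom fK); last exact: model_irreducible Hpsi Hm Hpar Hnz.
  exists w0; apply: contra_neq (oner_neq0 {mpoly R[i][n + n]}) => w0_eq0.
  by rewrite -f_w0 w0_eq0 linear0.
have rho_scalar b : inSub (m + n) n b -> forall v, rho b v = psi b *: v.
  move=> Hb; apply: (retract_scalar g_hom fK); last exact: (model_rho_scalar Hpsi Hb).
  by case: b Hb => //= a le_a; lia.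
by move=> w i; split; apply: rho_scalar => /=; lia.
Qed.
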